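(* Let $F$ be a finite field of odd characteristic in which $-1$ is not a square, fix $C_0\ge1$, let $m\ge1$, and let $A,B\subseteq F^2$ with $m/2\le|A|,|B|\le 2m$ be such that either both $A$ and $B$ are $k$-regular (with constant $C_0$) for the same $k$, or both $A$ and $B$ are irregular. Then $$\min\Big\{|F|\big(\mathcal{R}(A)\mathcal{R}(B)\big)^{1/2},\ \mathcal{T}(A,B)\Big\}\lesssim m^{8/3}|F|^{2/3}+m^{7/2},$$ with implied constant depending only on $C_0$.
   Context: $x\cdot y=x_1y_1+x_2y_2$ on $F^2$. $(x_0,x_1,x_2)$ is a corner if $(x_1-x_0)\cdot(x_2-x_1)=0$; $(x_0,x_1,x_2,x_3)$ is a rectangle if each $(x_i,x_{i+1},x_{i+2})$, indices mod 4, is a corner; $\mathcal{R}(A)$ is the number of rectangles in $A^4$. $(x_1,x_2,x_3,x_4)$ is a trapezoid if $x_1-x_2=\lambda(x_3-x_4)$ for some $\lambda\in F$; $\mathcal{T}(A,B)$ is the number of trapezoids with $x_1,x_2\in A$, $x_3,x_4\in B$. A line is $\{p+tv:t\in F\}$, $v\ne0$. $A$ is $k$-regular (with constant $C_0$) if $k\le C_0|A|^{1/2}$ and there exist a set $L$ of lines with $k/C_0\le|L|\le C_0k$ and a partition $A=\bigsqcup_{\ell\in L}A_\ell$, $A_\ell\subseteq\ell$, with $|A|/(C_0k)\le|A_\ell|\le C_0|A|/k$ for each $\ell$. $A$ is irregular if $|\ell\cap A|\le|A|^{1/2}$ for every line $\ell$. *)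

From mathcomp Require Import all_boot all_order all_algebra.
From Stdlib Require Import Reals.
Set Implicit Arguments. Unset Strict Implicit. Unset Printing Implicit Defensive.
Import GRing.Theory.

Section Defs.
Variable F : finFieldType.

Definition pt := (F * F)%type.
Local Open Scope ring_scope.

Definition neg1_nonsquare : Prop := ~ (exists x : F, x * x = -1).

Definition odd_char : Prop := 2%N \notin [pchar F].

Definition psub (x y : pt) : pt := (x.1 - y.1, x.2 - y.2).
Definition dot (x y : pt) : F := x.1 * y.1 + x.2 * y.2.

Definition corner (x0 x1 x2 : pt) : bool := dot (psub x1 x0) (psub x2 x1) == 0.

Definition rectangle (x0 x1 x2 x3 : pt) : bool :=
  [&& corner x0 x1 x2, corner x1 x2 x3, corner x2 x3 x0 & corner x3 x0 x1].

Definition nrect (A : {set pt}) : nat :=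
  #|[set q : pt * pt * pt * pt |
      [&& q.1.1.1 \in A, q.1.1.2 \in A, q.1.2 \in A, q.2 \in A &
          rectangle q.1.1.1 q.1.1.2 q.1.2 q.2]]|.

Definition trapezoid (x1 x2 x3 x4 : pt) : bool :=
  [exists l : F, psub x1 x2 == (l * (psub x3 x4).1, l * (psub x3 x4).2)].

Definition ntrap (A B : {set pt}) : nat :=
  #|[set q : pt * pt * pt * pt |
      [&& q.1.1.1 \in A, q.1.1.2 \in A, q.1.2 \in B, q.2 \in B &
          trapezoid q.1.1.1 q.1.1.2 q.1.2 q.2]]|.

Definition line_through (p v : pt) : {set pt} :=
  [set (p.1 + t * v.1, p.2 + t * v.2) | t : F].

Definition is_line (l : {set pt}) : Prop :=
  exists p v : pt, v != (0, 0) /\ l = line_through p v.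

Local Close Scope ring_scope.
Local Open Scope R_scope.

Definition k_regular (C0 k : R) (A : {set pt}) : Prop :=
  k <= C0 * sqrt (INR #|A|) /\
  exists (L : {set {set pt}}) (AL : {set pt} -> {set pt}),
    (forall l, l \in L -> is_line l) /\
    k / C0 <= INR #|L| <= C0 * k /\
    A = \bigcup_(l in L) AL l /\
    (forall l1 l2, l1 \in L -> l2 \in L -> l1 != l2 -> [disjoint AL l1 & AL l2]) /\
    (forall l, l \in L -> (AL l \subset l) /\
        INR #|A| / (C0 * k) <= INR #|AL l| <= C0 * INR #|A| / k).

Definition irregular (A : {set pt}) : Prop :=
  forall l, is_line l -> INR #|l :&: A| <= sqrt (INR #|A|).

End Defs.

(* Since -1 is not a square, the dot product is anisotropic: [dot u u = 0] forces [u = 0].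
   Hence a rectangle is determined by three of its vertices, and its third vertex lies on the
   line through [x1] orthogonal to [x1 - x0]; so R(A) is at most the sum, over pairs in A^2,
   of the number of points of A on such a line.  Likewise T(A,B) is at most the sum, over
   (x1, x3, x4) in A x B x B, of the number of points of A on the line x1 + F (x3 - x4).
   For a k-regular set a line meets A in at most |L| ~ k points unless it is one of the lines
   of the partition, and few pairs or triples produce such lines.  This gives
   R(A) <~ k m^2 and T(A,B) <~ m^(7/2) + m^4 / k^2, and the minimum of |F| k m^2 and
   m^4 / k^2 is at most m^(8/3) |F|^(2/3).  For irregular sets every line meets A in at most
   |A|^(1/2) points, so T(A,B) <~ m^(7/2). *)

From mathcomp Require Import all_boot all_order all_algebra.
From Stdlib Require Import Reals Lra Psatz.
From mathcomp Require Import ring.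
Import GRing.Theory.
Set Implicit Arguments. Unset Strict Implicit. Unset Printing Implicit Defensive.

Section Counting.
Variables T U : finType.

Lemma card_le_sum_fibers (S : {set T}) (D : {pred U}) (f : T -> U) (g : U -> nat) :
  {in S, forall x, f x \in D} ->
  {in D, forall u, #|[set x in S | f x == u]| <= g u} ->
  #|S| <= \sum_(u in D) g u.
Proof.
move=> fD hg; rewrite -sum1_card (partition_big f (mem D)) //=.
apply: leq_sum => u uD; apply: leq_trans (hg u uD).
by rewrite -sum1_card; apply/eq_leq/eq_bigl => x; rewrite inE.
Qed.

Lemma card_le_mul_fibers (S : {set T}) (D : {pred U}) (f : T -> U) (c : nat) :
  {in S, forall x, f x \in D} ->
  {in D, forall u, #|[set x in S | f x == u]| <= c} ->
  #|S| <= #|D| * c.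
Proof.
by move=> fD hc; rewrite -sum_nat_const; apply: (card_le_sum_fibers (g := fun=> c) fD).
Qed.

Lemma card_le_in_inj (S : {pred T}) (D : {pred U}) (f : T -> U) :
  {in S &, injective f} -> {in S, forall x, f x \in D} -> #|S| <= #|D|.
Proof.
move=> inj fD; rewrite -(card_in_imset inj); apply: subset_leq_card.
by apply/subsetP => _ /imsetP [x Sx ->]; apply: fD.
Qed.

Lemma sum_indicator_mul (D : {pred U}) (P : pred U) (c : nat) :
  \sum_(u in D) P u * c = #|[set u in D | P u]| * c.
Proof.
rewrite -big_distrl /= -sum1_card; congr (_ * _).
rewrite big_mkcond [RHS]big_mkcond /=; apply: eq_bigr => u _.
by rewrite inE; case: (u \in D); case: (P u).
Qed.

Lemma card_bigcup_le (I : finType) (P : {pred I}) (Y : I -> {set T}) :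
  #|\bigcup_(i in P) Y i| <= \sum_(i in P) #|Y i|.
Proof.
apply: (big_ind2 (fun (X : {set T}) n => #|X| <= n)) => // [|X1 n1 X2 n2 h1 h2].
  by rewrite cards0.
by apply: leq_trans (leq_card_setU X1 X2) (leq_add h1 h2).
Qed.

End Counting.

Section Plane.
Variable F : finFieldType.
Local Open Scope ring_scope.

Lemma card_setT_gt0 : (0 < #|[set: F]|)%nat.
Proof. by apply/card_gt0P; exists 0; rewrite inE. Qed.

Definition padd (x y : pt F) : pt F := (x.1 + y.1, x.2 + y.2).

Lemma psub_eq0 (u v : pt F) : psub u v = (0, 0) -> u = v.
Proof. by case: u v => [a b] [c d] [/eqP + /eqP]; rewrite !subr_eq0 => /eqP -> /eqP ->. Qed.

Lemma line_throughP (p v x : pt F) :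
  reflect (exists t, x = (p.1 + t * v.1, p.2 + t * v.2)) (x \in line_through p v).
Proof. by apply: (iffP imsetP) => [[t _ ->]|[t ->]]; exists t. Qed.

Lemma line_through_base (p v : pt F) : p \in line_through p v.
Proof. by apply/line_throughP; exists 0; rewrite !mul0r !addr0; case: p. Qed.

Lemma line_through_psubxx (p x : pt F) : line_through p (psub x x) = [set p].
Proof.
apply/setP => y; rewrite inE /psub !subrr; apply/line_throughP/eqP => [[t ->]|->].
  by rewrite !mulr0 !addr0; case: p.
by exists 0; rewrite !mulr0 !addr0; case: p.
Qed.

Lemma line_through_psub_is_line (p x y : pt F) : x != y -> is_line (line_through p (psub x y)).
Proof.
by move=> x_neq_y; exists p, (psub x y); split => //; apply: contra_neq x_neq_y => /psub_eq0.
Qed.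

Lemma trapezoid_line_through (x1 x2 x3 x4 : pt F) :
  trapezoid x1 x2 x3 x4 -> x2 \in line_through x1 (psub x3 x4).
Proof.
case/existsP => t /eqP x12E; apply/line_throughP; exists (- t).
case: x1 x2 x12E => [a1 a2] [b1 b2] [e1 e2] /=.
by congr (_, _); rewrite /psub /= mulNr -?e1 -?e2; ring.
Qed.

Definition cross (u v : pt F) : F := u.1 * v.2 - u.2 * v.1.

Lemma line_through_cross (p v x : pt F) : v != (0, 0) ->
  (x \in line_through p v) = (cross (psub x p) v == 0).
Proof.
move=> v_neq0; apply/line_throughP/eqP => [[t ->]|].
  by rewrite /cross /psub /=; ring.
case: v v_neq0 x p => v1 v2 v_neq0 [x1 x2] [p1 p2]; rewrite /cross /psub /= => /eqP.
rewrite subr_eq0 => /eqP h.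
have [v1_0|v1_neq0] := eqVneq v1 0.
  have v2_neq0 : v2 != 0 by apply: contraNneq v_neq0 => ->; rewrite v1_0.
  move: h; rewrite v1_0 mulr0 => /eqP; rewrite mulf_eq0 (negPf v2_neq0) orbF.
  rewrite subr_eq0 => /eqP x1E.
  by exists ((x2 - p2) / v2); rewrite divfK // mulr0 addr0 x1E; congr (_, _); ring.
exists ((x1 - p1) / v1); rewrite divfK //; congr (_, _); first by ring.
apply: (mulIf v1_neq0); rewrite mulrDl mulrAC divfK // h; ring.
Qed.

Lemma line_eq_cross (l : {set pt F}) x y : is_line l -> x \in l -> y \in l -> x != y ->
  l = [set z | cross (psub z x) (psub y x) == 0].
Proof.
case=> p [v [v_neq0 ->]] /line_throughP [s xE] /line_throughP [t yE] x_neq_y.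
have st_neq0 : t - s != 0.
  by apply: contraNneq x_neq_y => /eqP; rewrite subr_eq0 xE yE => /eqP ->.
apply/setP=> z; rewrite inE line_through_cross //.
have -> : cross (psub z x) (psub y x) = (t - s) * cross (psub z p) v.
  by rewrite xE yE /cross /psub /=; ring.
by rewrite mulf_eq0 (negPf st_neq0).
Qed.

Lemma card_meet_lines (l1 l2 : {set pt F}) : is_line l1 -> is_line l2 -> l1 != l2 ->
  (#|l1 :&: l2| <= 1)%nat.
Proof.
move=> l1_line l2_line l1_neq_l2; apply/card_le1_eqP => x y.
rewrite !inE => /andP [x_l1 x_l2] /andP [y_l1 y_l2]; apply/eqP.
apply: contraNT l1_neq_l2; rewrite eq_sym => x_neq_y.
by rewrite (line_eq_cross l1_line x_l1 y_l1 x_neq_y) (line_eq_cross l2_line x_l2 y_l2 x_neq_y).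
Qed.

(* For [x0 != x1] the line through [x1] orthogonal to [x1 - x0]; the whole plane if [x0 = x1]. *)
Definition perp_line (x0 x1 : pt F) : {set pt F} := [set x | corner x0 x1 x].

Lemma perp_line_is_line (x0 x1 : pt F) : x0 != x1 -> is_line (perp_line x0 x1).
Proof.
move=> x0_neq_x1; pose v := (- (x1.2 - x0.2), x1.1 - x0.1).
have v_neq0 : v != (0, 0).
  apply: contraNneq x0_neq_x1 => -[/eqP u2_0 /eqP u1_0]; move: u2_0 u1_0.
  by rewrite oppr_eq0 !subr_eq0; clear v; case: x0 x1 => [? ?] [? ?] /= /eqP -> /eqP ->.
exists x1, v; split => //; apply/setP => x.
by rewrite inE line_through_cross // /corner /cross /dot /=; congr (_ == 0); ring.
Qed.

Definition point_mirror (c : pt F) (l : {set pt F}) : {set pt F} := [set psub c x | x in l].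

Lemma point_mirror_is_line c (l : {set pt F}) : is_line l -> is_line (point_mirror c l).
Proof.
case=> p [v [v_neq0 ->]]; exists (psub c p), (- v.1, - v.2); split.
  by apply: contraNneq v_neq0 => -[/eqP v1_0 /eqP v2_0]; move: v1_0 v2_0;
     rewrite !oppr_eq0; case: v => ? ? /= /eqP -> /eqP ->.
rewrite /point_mirror /line_through -imset_comp; apply: eq_imset => t /=.
by rewrite /psub /=; congr (_, _); ring.
Qed.

Lemma mem_point_mirror_line_through (x1 x3 x4 : pt F) :
  x4 \in point_mirror (padd x1 x3) (line_through x1 (psub x3 x4)).
Proof.
apply/imsetP; exists (padd x1 (psub x3 x4)).
  by apply/line_throughP; exists 1; rewrite !mul1r.
by rewrite /padd /psub /=; case: x4 => ? ? /=; congr (_, _); ring.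
Qed.

Section Anisotropic.
Hypothesis neg1_nonsq : neg1_nonsquare F.

Lemma dot_self_eq0 (u : pt F) : dot u u = 0 -> u = (0, 0).
Proof.
case: u => a b; rewrite /dot /= => sum_sq0.
have [a0|a_neq0] := eqVneq a 0.
  by move: sum_sq0; rewrite a0 mul0r add0r => /eqP; rewrite mulf_eq0 orbb => /eqP ->.
exfalso; apply: neg1_nonsq; exists (b / a).
have bbE : b * b = - (a * a) by apply/eqP; rewrite -subr_eq0 opprK addrC sum_sq0.
by rewrite mulrACA -invfM bbE mulNr divff // mulf_neq0.
Qed.

Lemma perp_line_inj (x0 : pt F) : injective (perp_line x0).
Proof.
move=> x1 y1 lineE.
have y1_in : y1 \in perp_line x0 x1.
  by rewrite lineE inE /corner /dot /psub /= !subrr !mulr0 addr0.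
have x1_in : x1 \in perp_line x0 y1.
  by rewrite -lineE inE /corner /dot /psub /= !subrr !mulr0 addr0.
rewrite !inE /corner in y1_in x1_in.
apply/psub_eq0/dot_self_eq0.
have -> : dot (psub x1 y1) (psub x1 y1) =
    - (dot (psub x1 x0) (psub y1 x1) + dot (psub y1 x0) (psub x1 y1)).
  by rewrite /dot /psub /=; ring.
by rewrite (eqP y1_in) (eqP x1_in) addr0 oppr0.
Qed.

Lemma rectangle_opposite (x0 x1 x2 x3 : pt F) :
  rectangle x0 x1 x2 x3 -> x3 = psub (padd x0 x2) x1.
Proof.
case/and4P => /eqP c1 /eqP c2 /eqP c3 /eqP c4; apply/esym/psub_eq0/dot_self_eq0.
set y := psub _ _.
have -> : dot y y = - (dot (psub x1 x0) (psub x2 x1) + dot (psub x2 x1) (psub x3 x2)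
                      + dot (psub x3 x2) (psub x0 x3) + dot (psub x0 x3) (psub x1 x0)).
  by rewrite /y /dot /psub /padd /=; ring.
by rewrite c1 c2 c3 c4 !addr0 oppr0.
Qed.

End Anisotropic.

End Plane.

(* What the counting uses of a k-regular partition: parts [AL l] on the lines [l \in L]
   covering [A], of size at most [M]. *)
Definition line_cover (F : finFieldType) (A : {set pt F}) (L : {set {set pt F}})
    (AL : {set pt F} -> {set pt F}) (M : nat) : Prop :=
  [/\ {in L, forall l, is_line l}, A \subset \bigcup_(l in L) AL l,
      {in L, forall l, AL l \subset l} & {in L, forall l, #|AL l| <= M}].

Section LineCover.
Variables (F : finFieldType) (A : {set pt F}) (L : {set {set pt F}}).
Variables (AL : {set pt F} -> {set pt F}) (M : nat).
Hypothesis cover : line_cover A L AL M.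

Lemma card_meet_line_cover (ell : {set pt F}) :
  is_line ell -> #|A :&: ell| <= #|L| + (ell \in L) * M.
Proof.
case: cover => L_lines A_cover AL_sub AL_card ell_line.
have : A :&: ell \subset \bigcup_(l in L) (AL l :&: ell).
  apply/subsetP => x /setIP [/(subsetP A_cover)/bigcupP [l lL x_l] x_ell].
  by apply/bigcupP; exists l; rewrite // inE x_l.
move/subset_leq_card/leq_trans; apply; apply: leq_trans (card_bigcup_le _ _) _.
apply: (@leq_trans (\sum_(l in L) (1 + (l == ell) * M))).
  apply: leq_sum => l lL; have [<-|l_neq_ell] := eqVneq l ell.
    rewrite mul1n (leq_trans _ (leq_addl 1 M)) //.
    exact: leq_trans (subset_leq_card (subsetIl _ _)) (AL_card _ lL).
  rewrite mul0n addn0; apply: leq_trans (card_meet_lines (L_lines l lL) ell_line l_neq_ell).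
  exact/subset_leq_card/setSI/AL_sub.
rewrite big_split /= sum1_card leq_add2l.
have [ell_L|ell_notL] := boolP (ell \in L).
  by rewrite (bigD1 ell) //= eqxx big1 ?addn0 // => l /andP [_ /negPf ->].
by rewrite big1 // => l lL; case: eqP => // l_ell; move: lL; rewrite l_ell (negPf ell_notL).
Qed.

Lemma card_line_cover_gt0 x : x \in A -> 0 < #|L|.
Proof.
case: cover => _ A_cover _ _ /(subsetP A_cover)/bigcupP [l lL _].
by apply/card_gt0P; exists l.
Qed.

End LineCover.

Section RectangleCount.
Variable F : finFieldType.
Hypothesis neg1_nonsq : neg1_nonsquare F.
Variable A : {set pt F}.

Lemma nrect_le_sum_perp_lines :
  nrect A <= \sum_(u in setX A A) #|A :&: perp_line u.1 u.2|.
Proof.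
apply: (card_le_sum_fibers (f := fun q : pt F * pt F * pt F * pt F => (q.1.1.1, q.1.1.2))).
  by move=> q; rewrite !inE => /and5P [-> -> _ _ _].
case=> x0 x1 _; apply: (card_le_in_inj (f := fun q : pt F * pt F * pt F * pt F => q.1.2)).
  move=> [[[a0 a1] a2] a3] [[[b0 b1] b2] b3]; rewrite !inE /=.
  case/andP => /and5P [_ _ _ _ /(rectangle_opposite neg1_nonsq) ->] /eqP [-> ->].
  case/andP => /and5P [_ _ _ _ /(rectangle_opposite neg1_nonsq) ->] /eqP [-> ->].
  by move=> /= ->.
move=> [[[a0 a1] a2] a3]; rewrite !inE /=.
by case/andP => /and5P [_ _ -> _ /and4P [c _ _ _]] /eqP [<- <-].
Qed.

Variables (L : {set {set pt F}}) (AL : {set pt F} -> {set pt F}) (M : nat).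
Hypothesis cover : line_cover A L AL M.

Lemma card_pairs_perp_line_in_cover :
  #|[set u in setX A A | perp_line u.1 u.2 \in L]| <= #|A| * #|L|.
Proof.
rewrite -cardsX; apply: (card_le_in_inj (f := fun u => (u.1, perp_line u.1 u.2))).
  move=> [x0 x1] [y0 y1] _ _ /= [<-] /(perp_line_inj neg1_nonsq) -> //.
by move=> [x0 x1]; rewrite !inE /= => /andP [/andP [-> _] ->].
Qed.

Lemma nrect_le_line_cover :
  nrect A <= #|A| * #|A| + #|A| * #|A| * #|L| + #|A| * #|L| * M.
Proof.
apply: leq_trans nrect_le_sum_perp_lines _.
apply: (@leq_trans (\sum_(u in setX A A)
   ((u.1 == u.2) * #|A| + #|L| + (perp_line u.1 u.2 \in L) * M))).
  apply: leq_sum => -[x0 x1] _ /=; have [<-|x0_neq_x1] := eqVneq x0 x1.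
    rewrite mul1n -addnA; apply: leq_trans (leq_addr _ _); exact: subset_leq_card (subsetIl _ _).
  rewrite mul0n add0n; apply: (card_meet_line_cover cover); exact: perp_line_is_line.
have card_diag : #|[set u in setX A A | u.1 == u.2]| <= #|A|.
  apply: (card_le_in_inj (f := fst)) => [[x0 x1] [y0 y1]|[x0 x1]]; rewrite !inE /=.
    by case/andP => _ /eqP <- /andP [_ /eqP <-] ->.
  by case/andP => /andP [].
rewrite !big_split /= !sum_indicator_mul sum_nat_const cardsX.
by rewrite !leq_add ?leq_mul // card_pairs_perp_line_in_cover.
Qed.

End RectangleCount.

Section TrapezoidCount.
Variable F : finFieldType.
Implicit Types A B : {set pt F}.

Lemma ntrap_le_sum_lines A B :
  ntrap A B <= \sum_(u in setX (setX A B) B) #|A :&: line_through u.1.1 (psub u.1.2 u.2)|.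
Proof.
apply: (card_le_sum_fibers
  (f := fun q : pt F * pt F * pt F * pt F => (q.1.1.1, q.1.2, q.2))).
  by move=> q; rewrite !inE => /and5P [-> _ -> -> _].
case=> [[x1 x3] x4] _; apply: (card_le_in_inj (f := fun q : pt F * pt F * pt F * pt F => q.1.1.2)).
  move=> [[[a1 a2] a3] a4] [[[b1 b2] b3] b4]; rewrite !inE /=.
  by case/andP => _ /eqP [-> -> ->] /andP [_ /eqP [-> -> ->]] /= ->.
move=> [[[a1 a2] a3] a4]; rewrite !inE /=.
by case/andP => /and5P [_ -> _ _ /trapezoid_line_through] + /eqP [<- <- <-].
Qed.

Lemma ntrap_le_of_line_bound A B c :
  (forall ell, is_line ell -> #|A :&: ell| <= c) -> 0 < c ->
  ntrap A B <= #|A| * #|B| * #|B| * c.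
Proof.
move=> line_bound c_gt0; apply: leq_trans (ntrap_le_sum_lines A B) _.
rewrite -!cardsX -sum_nat_const; apply: leq_sum => -[[x1 x3] x4] _ /=.
have [<-|x3_neq_x4] := eqVneq x3 x4.
  by rewrite line_through_psubxx (leq_trans _ c_gt0) // -(cards1 x1) subset_leq_card // subsetIr.
exact/line_bound/line_through_psub_is_line.
Qed.

Variables (A B : {set pt F}) (LA LB : {set {set pt F}}).
Variables (ALA ALB : {set pt F} -> {set pt F}) (MA MB : nat).
Hypotheses (coverA : line_cover A LA ALA MA) (coverB : line_cover B LB ALB MB).

Lemma card_flags_in_cover :
  #|[set w : {set pt F} * pt F | (w.1 \in LA) && (w.2 \in A :&: w.1)]| <= #|LA| * (#|LA| + MA).
Proof.
apply: (card_le_mul_fibers (f := fst)) => [[l x] | l lLA]; first by rewrite inE => /andP [].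
apply: leq_trans (_ : #|A :&: l| <= _); last first.
  case: (coverA) => lines _ _ _.
  by apply: leq_trans (card_meet_line_cover coverA (lines _ lLA)) _; rewrite lLA mul1n.
apply: (card_le_in_inj (f := snd)) => [[l1 x1] [l2 x2]|[l1 x1]]; rewrite !inE /=.
  by case/andP => _ /eqP -> /andP [_ /eqP ->] /= ->.
by case/andP => /and3P [_ -> x_l1] /eqP <-.
Qed.

Lemma card_triples_parallel_line_in_cover :
  #|[set u in setX (setX A B) B | (u.1.2 != u.2) &&
                                (line_through u.1.1 (psub u.1.2 u.2) \in LA)]|
    <= #|LA| * (#|LA| + MA) * #|B| * (#|LB| + MB).
Proof.
pose D := [set w : {set pt F} * pt F | (w.1 \in LA) && (w.2 \in A :&: w.1)].
apply: (@leq_trans (#|setX D B| * (#|LB| + MB))); last first.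
  by rewrite cardsX !leq_mul2r card_flags_in_cover !orbT.
apply: (card_le_mul_fibers
  (f := fun u : pt F * pt F * pt F => (line_through u.1.1 (psub u.1.2 u.2), u.1.1, u.1.2))).
  move=> [[x1 x3] x4]; rewrite !inE /= => /and3P [/andP [/andP [x1_A x3_B] _] _ ->].
  by rewrite x1_A x3_B line_through_base.
move=> [[l x1] x3]; rewrite !inE /= => /andP [/and3P [l_LA _ _] _].
have l_line : is_line l by case: coverA => lines _ _ _; apply: lines.
pose c := padd x1 x3.
(* [x4] is the mirror image, in the midpoint of [x1] and [x3], of [x1 + x3 - x4 \in l]. *)
apply: (@leq_trans #|B :&: point_mirror c l|); last first.
  apply: leq_trans (card_meet_line_cover coverB (point_mirror_is_line c l_line)) _.
  by rewrite leq_add2l; case: (point_mirror c l \in LB); rewrite ?mul1n ?mul0n.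
apply: (card_le_in_inj (f := fun u : pt F * pt F * pt F => u.2)).
  move=> [[a1 a3] a4] [[b1 b3] b4]; rewrite !inE /=.
  by case/andP => _ /eqP [_ -> ->] /andP [_ /eqP [_ -> ->]] /= ->.
move=> [[a1 a3] a4]; rewrite !inE /= => /andP [/and3P [/andP [_ ->] _ _] /eqP [lE a1E a3E]] /=.
by rewrite /c -lE -a1E -a3E mem_point_mirror_line_through.
Qed.

Lemma ntrap_le_line_cover :
  ntrap A B <= #|A| * #|B| * #|B| * #|LA| + #|LA| * (#|LA| + MA) * #|B| * (#|LB| + MB) * MA.
Proof.
apply: leq_trans (ntrap_le_sum_lines A B) _.
apply: (@leq_trans (\sum_(u in setX (setX A B) B) (#|LA| + ((u.1.2 != u.2) &&
          (line_through u.1.1 (psub u.1.2 u.2) \in LA)) * MA))).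
  apply: leq_sum => -[[x1 x3] x4]; rewrite !inE /= => /andP [/andP [x1_A _] _].
  have [<-|x3_neq_x4] := eqVneq x3 x4.
    rewrite line_through_psubxx mul0n addn0 (leq_trans _ (card_line_cover_gt0 coverA x1_A)) //.
    by rewrite -(cards1 x1) subset_leq_card // subsetIr.
  exact/(card_meet_line_cover coverA)/line_through_psub_is_line.
rewrite big_split /= sum_nat_const sum_indicator_mul !cardsX.
by rewrite leq_add2l leq_mul2r card_triples_parallel_line_in_cover orbT.
Qed.

End TrapezoidCount.

Section RealEstimates.
Local Open Scope R_scope.

Lemma Rpower_pow_mul (x y : R) (n : nat) : 0 < x -> Rpower x y ^ n = Rpower x (INR n * y).
Proof. by move=> x_gt0; rewrite -Rpower_pow ?Rpower_mult 1?Rmult_comm //; apply: exp_pos. Qed.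

Lemma Rpower_7_2 (m : R) : 0 < m -> Rpower m (7 / 2) = m ^ 3 * sqrt m.
Proof.
move=> m_gt0; rewrite -Rpower_sqrt // -(Rpower_pow 3) // -Rpower_plus.
by congr Rpower; rewrite /= ; lra.
Qed.

Lemma sqrt_le_2_sqrt (a m : R) : 0 <= a <= 2 * m -> sqrt a <= 2 * sqrt m.
Proof.
move=> [a_ge0 a_le]; have m_ge0 : 0 <= m by lra.
have := sqrt_sqrt m m_ge0; have := sqrt_pos m => ? ?.
rewrite -(sqrt_square (2 * sqrt m)); last lra.
apply: sqrt_le_1_alt; nra.
Qed.

Lemma mul3_sqrt_le (gamma m a b c : R) :
  0 <= gamma -> 0 <= a <= 2 * m -> 0 <= b <= 2 * m -> 0 <= c <= gamma * sqrt a ->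
  a * b * b * c <= 16 * gamma * (m ^ 3 * sqrt m).
Proof.
move=> gamma_ge0 [a_ge0 a_le] [b_ge0 b_le] [c_ge0 c_le].
have c_le' : c <= gamma * (2 * sqrt m).
  by apply: Rle_trans c_le _; apply/Rmult_le_compat_l/sqrt_le_2_sqrt.
have -> : 16 * gamma * (m ^ 3 * sqrt m) = 2 * m * (2 * m) * (2 * m) * (gamma * (2 * sqrt m)).
  by lra.
apply: Rmult_le_compat => //; first by repeat apply: Rmult_le_pos.
apply: Rmult_le_compat => //; first by apply: Rmult_le_pos.
by apply: Rmult_le_compat.
Qed.

Lemma Rle_div_sqr (x y k : R) : 0 < k -> x * k ^ 2 <= y -> x <= y / k ^ 2.
Proof.
move=> k_gt0 xk_le; have k2_gt0 : 0 < k ^ 2 by apply: pow_lt.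
apply: (Rmult_le_reg_r (k ^ 2)) => //.
by rewrite /Rdiv Rmult_assoc Rinv_l ?Rmult_1_r //; lra.
Qed.

(* The two bounds cross at [q k^3 = m^2]: compare [q^(1/3) k] with [m^(2/3)]. *)
Lemma Rmin_le_balanced (alpha beta q m k X T : R) :
  0 < q -> 0 < m -> 0 < k -> 0 <= alpha -> 0 <= beta ->
  X <= alpha * k * m ^ 2 -> T <= beta * (m ^ 3 * sqrt m + m ^ 4 / k ^ 2) ->
  Rmin (q * X) T <= (alpha + beta) * (Rpower m (8 / 3) * Rpower q (2 / 3) + Rpower m (7 / 2)).
Proof.
move=> q_gt0 m_gt0 k_gt0 alpha_ge0 beta_ge0 X_le T_le.
set u := Rpower m (2 / 3); set Q := Rpower q (1 / 3).
have u_gt0 : 0 < u by apply: exp_pos.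
have Q_gt0 : 0 < Q by apply: exp_pos.
have u3 : u ^ 3 = m ^ 2.
  by rewrite Rpower_pow_mul // -(Rpower_pow 2) //; congr Rpower; rewrite /=; lra.
have Q3 : Q ^ 3 = q by rewrite Rpower_pow_mul // -[RHS]Rpower_1 //; congr Rpower; rewrite /=; lra.
have -> : Rpower q (2 / 3) = Q ^ 2 by rewrite Rpower_pow_mul //; congr Rpower; rewrite /=; lra.
have -> : Rpower m (8 / 3) = m ^ 2 * u.
  by rewrite -(Rpower_pow 2) // -Rpower_plus; congr Rpower; rewrite /=; lra.
rewrite Rpower_7_2 //.
have m3s_ge0 : 0 <= m ^ 3 * sqrt m by apply: Rmult_le_pos; [apply: pow_le; lra | apply: sqrt_pos].
have m2uQ2_ge0 : 0 <= m ^ 2 * u * Q ^ 2 by apply: Rmult_le_pos; nra.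
suff : Rmin (q * X) T <= alpha * (m ^ 2 * u * Q ^ 2) \/
       Rmin (q * X) T <= beta * (m ^ 2 * u * Q ^ 2 + m ^ 3 * sqrt m).
  by case; nra.
have [Qk_le|u_lt] := Rle_or_lt (Q * k) u; [left | right].
  apply: Rle_trans (Rmin_l _ _) _.
  have qX_le : q * X <= alpha * (m ^ 2 * Q ^ 2) * (Q * k).
    rewrite -Q3; apply: Rle_trans (_ : Q ^ 3 * (alpha * k * m ^ 2) <= _); last lra.
    by apply: Rmult_le_compat_l => //; apply: pow_le; lra.
  have : 0 <= alpha * (m ^ 2 * Q ^ 2) by apply: Rmult_le_pos => //; nra.
  nra.
apply: Rle_trans (Rmin_r _ _) _; apply: Rle_trans T_le _.
apply: Rmult_le_compat_l => //; suff : m ^ 4 / k ^ 2 <= m ^ 2 * u * Q ^ 2 by lra.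
have m4_le : m ^ 4 <= m ^ 2 * u * Q ^ 2 * k ^ 2.
  have -> : m ^ 4 = m ^ 2 * u ^ 3 by rewrite u3; lra.
  have : u * u <= (Q * k) * (Q * k) by nra.
  have : 0 <= m ^ 2 * u by nra.
  nra.
have k2_inv : k ^ 2 * / k ^ 2 = 1 by apply: Rinv_r; apply: pow_nonzero; lra.
rewrite /Rdiv -[X in _ <= X]Rmult_1_r -k2_inv -Rmult_assoc.
by apply: Rmult_le_compat_r => //; apply/Rlt_le/Rinv_0_lt_compat/pow_lt.
Qed.

Lemma nrect_estimate (C0 k m a lam mu N : R) :
  1 <= C0 -> 0 <= a <= 2 * m -> 1 <= lam <= C0 * k -> 0 <= mu -> mu * k <= C0 * a ->
  N <= a * a + a * a * lam + a * lam * mu -> N <= 12 * C0 ^ 3 * k * m ^ 2.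
Proof.
move=> C0_ge1 [a_ge0 a_le] [lam_ge1 lam_le] mu_ge0 muk_le N_le.
have C0k_ge1 : 1 <= C0 * k by lra.
have k_gt0 : 0 < k by nra.
have km2_ge0 : 0 <= k * m ^ 2 by apply: Rmult_le_pos; nra.
have C0_le : C0 <= C0 ^ 3 by nra.
have C03k_ge1 : 1 <= C0 ^ 3 * k by nra.
have aa_le : a * a <= 4 * m ^ 2 by nra.
have aalam_le : a * a * lam <= 4 * C0 ^ 3 * k * m ^ 2.
  have : a * a * lam <= 4 * m ^ 2 * (C0 * k) by nra.
  nra.
have alammu_le : a * lam * mu <= 4 * C0 ^ 3 * k * m ^ 2.
  have amu_ge0 : 0 <= a * mu by nra.
  have C0a_ge0 : 0 <= C0 * a by nra.
  have : a * lam * mu <= C0 ^ 2 * (a * a) by nra.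
  have : C0 ^ 2 * (a * a) <= 4 * C0 ^ 2 * m ^ 2 * (C0 * k) by nra.
  nra.
have : a * a <= 4 * C0 ^ 3 * k * m ^ 2 by nra.
lra.
Qed.

Lemma ntrap_estimate (C0 k m a b lamA muA lamB muB T : R) :
  1 <= C0 -> 0 < k -> k <= C0 * sqrt a -> 0 <= a <= 2 * m -> 0 <= b <= 2 * m ->
  1 <= lamA <= C0 * k -> 0 <= muA -> muA * k <= C0 * a ->
  1 <= lamB <= C0 * k -> 0 <= muB -> muB * k <= C0 * b ->
  T <= a * b * b * lamA + lamA * (lamA + muA) * b * (lamB + muB) * muA ->
  T <= 64 * C0 ^ 8 * (m ^ 3 * sqrt m + m ^ 4 / k ^ 2).
Proof.
move=> C0_ge1 k_gt0 k_le [a_ge0 a_le] [b_ge0 b_le] [lamA_ge1 lamA_le] muA_ge0 muAk_le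
  [lamB_ge1 lamB_le] muB_ge0 muBk_le T_le.
have C0_gt0 : 0 < C0 by lra.
have m_ge0 : 0 <= m by lra.
have k2_le : k ^ 2 <= 2 * C0 ^ 2 * m.
  have sqrt_a2 := sqrt_sqrt a a_ge0; have := sqrt_pos a; nra.
have C0_le : C0 <= C0 ^ 3 by nra.
have sumA_le : (lamA + muA) * k <= 4 * C0 ^ 3 * m by nra.
have sumB_le : (lamB + muB) * k <= 4 * C0 ^ 3 * m by nra.
have prodA_le : lamA * muA <= 2 * C0 ^ 2 * m.
  have : lamA * muA <= C0 * (muA * k) by nra.
  nra.
have second_le : lamA * (lamA + muA) * b * (lamB + muB) * muA <= 64 * C0 ^ 8 * m ^ 4 / k ^ 2.
  apply: Rle_div_sqr => //.
  have -> : lamA * (lamA + muA) * b * (lamB + muB) * muA * k ^ 2 =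
            (lamA * muA) * ((lamA + muA) * k) * b * ((lamB + muB) * k) by lra.
  apply: Rle_trans (_ : 2 * C0 ^ 2 * m * (4 * C0 ^ 3 * m) * (2 * m) * (4 * C0 ^ 3 * m) <= _); last lra.
  have prodA_ge0 : 0 <= lamA * muA by nra.
  have sumA_ge0 : 0 <= (lamA + muA) * k by nra.
  have sumB_ge0 : 0 <= (lamB + muB) * k by nra.
  apply: Rmult_le_compat => //; first by repeat apply: Rmult_le_pos; lra.
  apply: Rmult_le_compat => //; first by repeat apply: Rmult_le_pos; lra.
  by apply: Rmult_le_compat.
have first_le : a * b * b * lamA <= 64 * C0 ^ 8 * (m ^ 3 * sqrt m).
  have lamA_le' : lamA <= C0 ^ 2 * sqrt a by nra.
  have C0_le' : 16 * C0 ^ 2 <= 64 * C0 ^ 8.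
    by have := pow_R1_Rle C0 6 C0_ge1; have := pow_le C0 2 (Rlt_le _ _ C0_gt0); nra.
  have := mul3_sqrt_le (pow_le C0 2 (Rlt_le _ _ C0_gt0)) (conj a_ge0 a_le) (conj b_ge0 b_le)
            (conj (Rle_trans _ _ _ Rle_0_1 lamA_ge1) lamA_le').
  have : 0 <= m ^ 3 * sqrt m by apply: Rmult_le_pos; [apply: pow_le | apply: sqrt_pos].
  nra.
lra.
Qed.

Lemma sqrt_mul_le (x y c : R) : 0 <= x <= c -> 0 <= y <= c -> sqrt (x * y) <= c.
Proof.
move=> [x_ge0 x_le] [y_ge0 y_le]; rewrite -(sqrt_square c); last lra.
by apply: sqrt_le_1_alt; apply: Rmult_le_compat.
Qed.

End RealEstimates.

Section NatToReal.
Local Open Scope R_scope.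

Lemma INR_addn (m n : nat) : INR (m + n) = INR m + INR n.
Proof. by rewrite -plusE plus_INR. Qed.

Lemma INR_muln (m n : nat) : INR (m * n) = INR m * INR n.
Proof. by rewrite -multE mult_INR. Qed.

Lemma INR_leq (m n : nat) : (m <= n)%nat -> INR m <= INR n.
Proof. by move/leP; apply: le_INR. Qed.

Lemma INR_gt0 (n : nat) : 0 < INR n -> (0 < n)%nat.
Proof. by move/(INR_lt 0)/ltP. Qed.

Lemma leq_Nat_sqrt (x n : nat) : INR x <= sqrt (INR n) -> (x <= Nat.sqrt n)%nat.
Proof.
move=> x_le; apply/leP/Nat.sqrt_le_square/INR_le; rewrite mult_INR.
have := sqrt_sqrt (INR n) (pos_INR n); have := pos_INR x; have := sqrt_pos (INR n); nra.
Qed.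

Lemma INR_Nat_sqrt_le (n : nat) : INR (Nat.sqrt n) <= sqrt (INR n).
Proof.
have /le_INR sq_le : (Nat.sqrt n * Nat.sqrt n <= n)%coq_nat by apply/Nat.sqrt_le_square.
rewrite -[X in X <= _](sqrt_square (INR (Nat.sqrt n))); last exact: pos_INR.
by apply: sqrt_le_1_alt; rewrite -mult_INR.
Qed.

End NatToReal.

Section Cases.
Variable F : finFieldType.
Local Open Scope R_scope.

Lemma k_regular_line_cover (C0 k : R) (A : {set pt F}) :
  1 <= C0 -> (0 < #|A|)%nat -> k_regular C0 k A ->
  exists L AL M, [/\ line_cover A L AL M, 0 < k, 1 <= INR #|L| <= C0 * k
                   & INR M * k <= C0 * INR #|A|].
Proof.
move=> C0_ge1 A_gt0 [_ [L [AL [lines [[_ L_le] [A_eq [_ parts]]]]]]].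
pose M := (\max_(l in L) #|AL l|)%nat.
have cover : line_cover A L AL M.
  split=> // [|l lL|l lL]; [by rewrite A_eq | exact: (parts l lL).1 | exact: leq_bigmax_cond].
have /card_gt0P [x x_A] := A_gt0.
have L_gt0 := card_line_cover_gt0 cover x_A.
have L_ge1 : 1 <= INR #|L| by apply: (INR_leq L_gt0).
have k_gt0 : 0 < k by nra.
exists L, AL, M; split => //; rewrite /M.
have [l0 l0L ->] := eq_bigmax_cond (fun l => #|AL l|) L_gt0.
have [_ [_ ALl0_le]] := parts l0 l0L.
have := Rmult_le_compat_r k _ _ (Rlt_le _ _ k_gt0) ALl0_le.
by rewrite /Rdiv Rmult_assoc Rinv_l ?Rmult_1_r //; lra.
Qed.

Variables (C0 m : R) (A B : {set pt F}).
Hypotheses (C0_ge1 : 1 <= C0) (m_ge1 : 1 <= m).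
Hypotheses (A_card : m / 2 <= INR #|A| <= 2 * m) (B_card : m / 2 <= INR #|B| <= 2 * m).

Lemma min_rect_trap_le_regular (k : R) : neg1_nonsquare F -> k_regular C0 k A -> k_regular C0 k B ->
  Rmin (INR #|[set: F]| * sqrt (INR (nrect A) * INR (nrect B))) (INR (ntrap A B))
  <= (12 * C0 ^ 3 + 64 * C0 ^ 8) *
     (Rpower m (8 / 3) * Rpower (INR #|[set: F]|) (2 / 3) + Rpower m (7 / 2)).
Proof.
move=> neg1_nonsq regA regB.
have A_gt0 : (0 < #|A|)%nat by apply: INR_gt0; lra.
have B_gt0 : (0 < #|B|)%nat by apply: INR_gt0; lra.
have [LA [ALA [MA [coverA k_gt0 LA_bnd MA_bnd]]]] := k_regular_line_cover C0_ge1 A_gt0 regA.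
have [LB [ALB [MB [coverB _ LB_bnd MB_bnd]]]] := k_regular_line_cover C0_ge1 B_gt0 regB.
have nrectA := INR_leq (nrect_le_line_cover neg1_nonsq coverA).
have nrectB := INR_leq (nrect_le_line_cover neg1_nonsq coverB).
have ntrapAB := INR_leq (ntrap_le_line_cover coverA coverB).
rewrite !(INR_addn, INR_muln) in nrectA nrectB ntrapAB.
have A_range : 0 <= INR #|A| <= 2 * m by split; [exact: pos_INR | lra].
have B_range : 0 <= INR #|B| <= 2 * m by split; [exact: pos_INR | lra].
have C0_ge0 : 0 <= C0 by lra.
apply: (Rmin_le_balanced (k := k)) => //; first exact/lt_0_INR/ltP/card_setT_gt0.
- lra.
- by have := pow_le _ 3 C0_ge0; lra.
- by have := pow_le _ 8 C0_ge0; lra.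
- apply: sqrt_mul_le; split; try exact: pos_INR.
    exact: (nrect_estimate C0_ge1 A_range LA_bnd (pos_INR _) MA_bnd nrectA).
  exact: (nrect_estimate C0_ge1 B_range LB_bnd (pos_INR _) MB_bnd nrectB).
- exact: (ntrap_estimate C0_ge1 k_gt0 regA.1 A_range B_range LA_bnd (pos_INR _) MA_bnd
                         LB_bnd (pos_INR _) MB_bnd ntrapAB).
Qed.

Lemma min_rect_trap_le_irregular : irregular A ->
  Rmin (INR #|[set: F]| * sqrt (INR (nrect A) * INR (nrect B))) (INR (ntrap A B))
  <= (12 * C0 ^ 3 + 64 * C0 ^ 8) *
     (Rpower m (8 / 3) * Rpower (INR #|[set: F]|) (2 / 3) + Rpower m (7 / 2)).
Proof.
move=> irrA.
have A_gt0 : (0 < #|A|)%nat by apply: INR_gt0; lra.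
have line_bound ell : is_line ell -> (#|A :&: ell| <= Nat.sqrt #|A|)%nat.
  by move=> ell_line; apply: leq_Nat_sqrt; rewrite setIC; apply: irrA.
have sqrtA_gt0 : (0 < Nat.sqrt #|A|)%nat by apply/leP/Nat.sqrt_le_square; apply/leP.
have ntrapAB := INR_leq (ntrap_le_of_line_bound B line_bound sqrtA_gt0).
rewrite !INR_muln in ntrapAB.
have A_range : 0 <= INR #|A| <= 2 * m by split; [exact: pos_INR | lra].
have B_range : 0 <= INR #|B| <= 2 * m by split; [exact: pos_INR | lra].
have sqrtA_range : 0 <= INR (Nat.sqrt #|A|) <= 1 * sqrt (INR #|A|).
  by rewrite Rmult_1_l; split; [exact: pos_INR | exact: INR_Nat_sqrt_le].
apply: Rle_trans (Rmin_r _ _) _.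
apply: Rle_trans ntrapAB _.
apply: Rle_trans (mul3_sqrt_le Rle_0_1 A_range B_range sqrtA_range) _.
rewrite Rpower_7_2; last lra.
have : 0 <= Rpower m (8 / 3) * Rpower (INR #|[set: F]|) (2 / 3).
  by apply: Rmult_le_pos; apply/Rlt_le/exp_pos.
have : 0 <= m ^ 3 * sqrt m by apply: Rmult_le_pos; [apply: pow_le; lra | apply: sqrt_pos].
have : 16 <= 12 * C0 ^ 3 + 64 * C0 ^ 8.
  by have := pow_R1_Rle C0 3 C0_ge1; have := pow_R1_Rle C0 8 C0_ge1; lra.
nra.
Qed.

End Cases.

Theorem proposition4p4 :
  forall C0 : R, (1 <= C0)%R ->
  exists K : R, forall (F : finFieldType),
    odd_char F ->
    neg1_nonsquare F ->
    forall (m : R) (A B : {set pt F}),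
      (1 <= m)%R ->
      (m / 2 <= INR #|A| <= 2 * m)%R ->
      (m / 2 <= INR #|B| <= 2 * m)%R ->
      ((exists k : R, k_regular C0 k A /\ k_regular C0 k B) \/
       (irregular A /\ irregular B)) ->
      (Rmin (INR #|[set: F]| * sqrt (INR (nrect A) * INR (nrect B)))
            (INR (ntrap A B))
       <= K * (Rpower m (8 / 3) * Rpower (INR #|[set: F]|) (2 / 3)
               + Rpower m (7 / 2)))%R.
Proof.
move=> C0 C0_ge1; exists (12 * C0 ^ 3 + 64 * C0 ^ 8)%R.
(* [odd_char] is implied by [neg1_nonsquare]: in characteristic 2, -1 = 1 * 1. *)
move=> F _ neg1_nonsq m A B m_ge1 A_card B_card [[k [regA regB]]|[irrA _]].
  exact: (min_rect_trap_le_regular C0_ge1 m_ge1 A_card B_card neg1_nonsq regA regB).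
exact: min_rect_trap_le_irregular.
Qed.
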